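(* Let $T\subset\mathbb R^2$ be a triangle all of whose interior angles are at least $\omega_0\in(0,\pi/3]$, and set $$c_{inv}^2:=24\cot(\omega_0)\Big(2\cot(\omega_0)-\cot(2\omega_0)+\big((2\cot(\omega_0)-\cot(2\omega_0))^2-3\big)^{1/2}\Big).$$ Then every affine function $p_1$ on $T$ satisfies $\|\nabla p_1\|_{L^2(T)}\le c_{inv}\,h_T^{-1}\|p_1\|_{L^2(T)}$.
   Context: $h_T=\operatorname{diam}(T)$. *)

From Stdlib Require Import Reals Lra.
Open Scope R_scope.

Definition pt := (R * R)%type.
Definition dot (u v : pt) : R := fst u * fst v + snd u * snd v.
Definition vsub (u v : pt) : pt := (fst u - fst v, snd u - snd v).
Definition dist2 (u v : pt) : R := sqrt (dot (vsub u v) (vsub u v)).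
Definition cot (x : R) : R := cos x / sin x.

Definition det2 (u v : pt) : R := fst u * snd v - snd u * fst v.
Definition nondegenerate (A B C : pt) : Prop := det2 (vsub B A) (vsub C A) <> 0.

Definition in_tri (A B C x : pt) : Prop :=
  exists l1 l2 l3, 0 <= l1 /\ 0 <= l2 /\ 0 <= l3 /\ l1 + l2 + l3 = 1 /\
    fst x = l1 * fst A + l2 * fst B + l3 * fst C /\
    snd x = l1 * snd A + l2 * snd B + l3 * snd C.

Definition angle_at (P Q S : pt) : R :=
  acos (dot (vsub Q P) (vsub S P) / (dist2 Q P * dist2 S P)).

Definition is_diam (A B C : pt) (h : R) : Prop :=
  is_lub (fun d => exists x y, in_tri A B C x /\ in_tri A B C y /\ d = dist2 x y) h.

Definition Fref (A B C : pt) (s t : R) : pt :=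
  (fst A + s * (fst B - fst A) + t * (fst C - fst A),
   snd A + s * (snd B - snd A) + t * (snd C - snd A)).

(* v = int_T g  (Lebesgue integral over T, computed as iterated Riemann integral
   over the reference triangle via the affine change of variables) *)
Definition tri_integral_is (A B C : pt) (g : pt -> R) (v : R) : Prop :=
  exists h : R -> R,
    (forall s, 0 <= s <= 1 ->
       exists pr : Riemann_integrable (fun t => g (Fref A B C s t)) 0 (1 - s),
         RiemannInt pr = h s) /\
    exists pr2 : Riemann_integrable h 0 1,
      v = Rabs (det2 (vsub B A) (vsub C A)) * RiemannInt pr2.

Definition affine (a b c : R) (x : pt) : R := a * fst x + b * snd x + c.

Definition c_inv_sq (w0 : R) : R :=
  24 * cot w0 * (2 * cot w0 - cot (2 * w0)
     + sqrt ((2 * cot w0 - cot (2 * w0)) ^ 2 - 3)).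

(* With k = cot w0 and d = |det(B - A, C - A)| (twice the area of T), every angle
   being at least w0 bounds the dot product of the two edges at each vertex by k d.
   A squared edge is the sum of the dot products at its two endpoints, so
   h_T^2 <= 2 k d.  Integrating exactly, int_T |grad p|^2 = d |grad p|^2 / 2 and
   int_T p^2 >= d Q / 72, where Q is the sum of the squared differences of p along
   the three edges.  The heart of the proof is d |grad p|^2 <= k Q: the matrix
   M = sum e e^T over the edge vectors has trace 2 S and determinant 3 d^2, where
   S is the sum e_A + e_B + e_C of the vertex dot products, and these satisfy
   e_A e_B + e_B e_C + e_C e_A = d^2 and e_i <= k d, which forces k M - d I to be
   positive semidefinite.  Altogether h_T^2 int |grad p|^2 <= 72 k^2 int p^2, and
   72 k^2 = c_inv^2 when w0 <= pi/3. *)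

From Stdlib Require Import Reals Lra Psatz.
From Coquelicot Require Import Coquelicot.
Open Scope R_scope.

Lemma cot_pos (w : R) : 0 < w < PI / 2 -> 0 < cot w.
Proof.
  intros Hw. pose proof PI_RGT_0.
  apply Rdiv_lt_0_compat; [apply cos_gt_0 | apply sin_gt_0]; lra.
Qed.

Lemma cot_sq_ge_one_third (w : R) : 0 < w <= PI / 3 -> 1 <= 3 * cot w ^ 2.
Proof.
  intros Hw. pose proof PI_RGT_0.
  assert (Hsin : 0 < sin w) by (apply sin_gt_0; lra).
  assert (Hmono : 0 <= sin (PI / 3 - w)) by (apply sin_ge_0; lra).
  rewrite sin_minus, sin_PI3, cos_PI3 in Hmono.
  assert (H1 : 1 <= sqrt 3 * cot w).
  { apply (Rmult_le_reg_r (sin w)); auto. unfold cot.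
    replace (sqrt 3 * (cos w / sin w) * sin w) with (sqrt 3 * cos w) by (field; lra). lra. }
  replace (3 * cot w ^ 2) with ((sqrt 3 * cot w) ^ 2)
    by (rewrite Rpow_mult_distr, <- Rsqr_pow2, Rsqr_sqrt; lra).
  nra.
Qed.

Lemma c_inv_sq_eq (w : R) : 0 < w <= PI / 3 -> c_inv_sq w = 72 * cot w ^ 2.
Proof.
  intros Hw. pose proof PI_RGT_0.
  pose proof (cot_sq_ge_one_third w Hw) as H3.
  assert (Hk : 0 < cot w) by (apply cot_pos; lra).
  assert (Hsin : 0 < sin w) by (apply sin_gt_0; lra).
  assert (Hcot2 : cot (2 * w) = (cot w ^ 2 - 1) / (2 * cot w)).
  { assert (0 < cos w) by (apply cos_gt_0; lra).
    unfold cot. rewrite cos_2a, sin_2a. field. lra. }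
  unfold c_inv_sq. rewrite Hcot2.
  replace ((2 * cot w - (cot w ^ 2 - 1) / (2 * cot w)) ^ 2 - 3)
    with (((3 * cot w ^ 2 - 1) / (2 * cot w)) ^ 2) by (field; lra).
  rewrite sqrt_pow2.
  - field. lra.
  - apply Rmult_le_pos; [lra | left; apply Rinv_0_lt_compat; lra].
Qed.

Lemma dot_le_cot_mul_det (w0 : R) (u v : pt) :
  0 < w0 < PI -> det2 u v <> 0 ->
  w0 <= acos (dot u v / (sqrt (dot u u) * sqrt (dot v v))) ->
  dot u v <= cot w0 * Rabs (det2 u v).
Proof.
  intros Hw HD Hang.
  set (N := sqrt (dot u u) * sqrt (dot v v)) in Hang.
  set (x := dot u v / N) in Hang.
  assert (Lagrange : dot u v ^ 2 + det2 u v ^ 2 = N ^ 2).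
  { unfold N. rewrite Rpow_mult_distr, <- !Rsqr_pow2, !Rsqr_sqrt.
    - unfold Rsqr, dot, det2. ring.
    - unfold dot. nra.
    - unfold dot. nra. }
  assert (HD2 : 0 < det2 u v ^ 2) by (rewrite <- Rsqr_pow2; apply Rsqr_pos_lt; auto).
  assert (HN : 0 < N).
  { assert (0 <= N) by (unfold N; apply Rmult_le_pos; apply sqrt_pos).
    pose proof (pow2_ge_0 (dot u v)). nra. }
  assert (Hdot : dot u v = N * x) by (unfold x; field; lra).
  assert (Hx2 : x ^ 2 <= 1).
  { apply (Rmult_le_reg_r (N ^ 2)); [apply pow_lt; lra|].
    rewrite <- Rpow_mult_distr, Rmult_comm, <- Hdot. lra. }
  assert (Hx : -1 <= x <= 1) by (split; nra).
  assert (Hsin : sin (acos x) = Rabs (det2 u v) / N).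
  { rewrite sin_acos by auto. rewrite <- (sqrt_pow2 (Rabs (det2 u v) / N)).
    - f_equal. replace ((Rabs (det2 u v) / N) ^ 2) with (Rabs (det2 u v) ^ 2 / N ^ 2) by (field; lra).
      rewrite pow2_abs. replace (det2 u v ^ 2) with (N ^ 2 - dot u v ^ 2) by lra.
      unfold Rsqr, x. field. lra.
    - apply Rmult_le_pos; [apply Rabs_pos | left; apply Rinv_0_lt_compat; lra]. }
  pose proof (acos_bound x).
  assert (Hsw : 0 < sin w0) by (apply sin_gt_0; lra).
  assert (Hdiff : 0 <= sin (acos x - w0)) by (apply sin_ge_0; lra).
  rewrite sin_minus, Hsin, cos_acos in Hdiff by auto.
  unfold cot. rewrite Hdot.
  apply (Rmult_le_reg_r (sin w0)); auto.
  replace (cos w0 / sin w0 * Rabs (det2 u v) * sin w0) with (N * (Rabs (det2 u v) / N * cos w0))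
    by (field; lra).
  nra.
Qed.

Definition twice_area (A B C : pt) : R := Rabs (det2 (vsub B A) (vsub C A)).

Lemma vertex_dots_le (w0 : R) (A B C : pt) :
  0 < w0 < PI -> nondegenerate A B C ->
  w0 <= angle_at A B C -> w0 <= angle_at B C A -> w0 <= angle_at C A B ->
  dot (vsub B A) (vsub C A) <= cot w0 * twice_area A B C /\
  dot (vsub C B) (vsub A B) <= cot w0 * twice_area A B C /\
  dot (vsub A C) (vsub B C) <= cot w0 * twice_area A B C.
Proof.
  intros Hw Hnd HA HB HC.
  assert (DB : det2 (vsub C B) (vsub A B) = det2 (vsub B A) (vsub C A))
    by (unfold det2, vsub; cbn [fst snd]; ring).
  assert (DC : det2 (vsub A C) (vsub B C) = det2 (vsub B A) (vsub C A))
    by (unfold det2, vsub; cbn [fst snd]; ring).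
  unfold twice_area. rewrite <- DB at 2. rewrite <- DC at 2.
  unfold nondegenerate in Hnd.
  repeat split; apply dot_le_cot_mul_det; auto; congruence.
Qed.

Lemma quad_form_nonneg (al be de x y : R) :
  0 <= al + de -> be ^ 2 <= al * de -> 0 <= al * x ^ 2 + 2 * be * x * y + de * y ^ 2.
Proof.
  intros Htr Hdet.
  pose proof (pow2_ge_0 be).
  assert (Hal : 0 <= al) by nra.
  assert (Hde : 0 <= de) by nra.
  set (q := al * x ^ 2 + 2 * be * x * y + de * y ^ 2).
  destruct (Rle_lt_dec al 0) as [Hal0 | Hal0].
  - assert (Hbe : be = 0) by nra.
    unfold q. replace al with 0 by lra. subst be. pose proof (pow2_ge_0 y). nra.
  - assert (al * q = (al * x + be * y) ^ 2 + (al * de - be ^ 2) * y ^ 2) by (unfold q; ring).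
    pose proof (pow2_ge_0 (al * x + be * y)). pose proof (pow2_ge_0 y).
    assert (0 <= al * q) by nra.
    nra.
Qed.

Lemma twice_area_grad_sq_le (A B C : pt) (k a b c : R) :
  let d := twice_area A B C in
  let p := affine a b c in
  0 < d ->
  dot (vsub B A) (vsub C A) <= k * d ->
  dot (vsub C B) (vsub A B) <= k * d ->
  dot (vsub A C) (vsub B C) <= k * d ->
  d * (a ^ 2 + b ^ 2) <= k * ((p B - p A) ^ 2 + (p C - p A) ^ 2 + (p C - p B) ^ 2).
Proof.
  intros d p Hd HeA HeB HeC.
  assert (Hd2 : d ^ 2 = det2 (vsub B A) (vsub C A) ^ 2) by apply pow2_abs.
  set (u1 := fst B - fst A). set (u2 := snd B - snd A).
  set (v1 := fst C - fst A). set (v2 := snd C - snd A).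
  replace (p B - p A) with (a * u1 + b * u2) by (unfold p, affine, u1, u2; ring).
  replace (p C - p A) with (a * v1 + b * v2) by (unfold p, affine, v1, v2; ring).
  replace (p C - p B) with (a * (v1 - u1) + b * (v2 - u2))
    by (unfold p, affine, u1, u2, v1, v2; ring).
  unfold dot, det2, vsub in *. cbn [fst snd] in *. fold u1 u2 v1 v2 in HeA. fold u1 u2 v1 v2 in Hd2.
  set (eA := u1 * v1 + u2 * v2) in *.
  set (eB := (fst C - fst B) * (fst A - fst B) + (snd C - snd B) * (snd A - snd B)) in *.
  set (eC := (fst A - fst C) * (fst B - fst C) + (snd A - snd C) * (snd B - snd C)) in *.
  set (S := eA + eB + eC).
  (* entries of the edge matrix sum e e^T *)
  set (X11 := u1 ^ 2 + v1 ^ 2 + (v1 - u1) ^ 2).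
  set (X22 := u2 ^ 2 + v2 ^ 2 + (v2 - u2) ^ 2).
  set (X12 := u1 * u2 + v1 * v2 + (v1 - u1) * (v2 - u2)).
  assert (Htrace : X11 + X22 = 2 * S) by (unfold X11, X22, S, eA, eB, eC, u1, u2, v1, v2; ring).
  assert (Hdet : X11 * X22 - X12 ^ 2 = 3 * d ^ 2) by (rewrite Hd2; unfold X11, X22, X12; ring).
  (* the identity cot A cot B + cot B cot C + cot C cot A = 1 *)
  assert (Hsym : eA * eB + eB * eC + eC * eA = d ^ 2)
    by (rewrite Hd2; unfold eA, eB, eC, u1, u2, v1, v2; ring).
  assert (HS2 : 3 * d ^ 2 <= S ^ 2).
  { pose proof (pow2_ge_0 (eA - eB)). pose proof (pow2_ge_0 (eB - eC)).
    pose proof (pow2_ge_0 (eC - eA)). unfold S. nra. }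
  assert (HS : 0 < S).
  { assert (0 <= X11 + X22) by (unfold X11, X22; nra). nra. }
  assert (HkS : d <= k * S) by (unfold S in *; nra).
  assert (HdetM : 0 <= 3 * k ^ 2 * d ^ 2 - 2 * k * d * S + d ^ 2).
  { assert (0 <= (k * d - eA) * (k * d - eB)) by (apply Rmult_le_pos; lra).
    assert (0 <= (k * d - eB) * (k * d - eC)) by (apply Rmult_le_pos; lra).
    assert (0 <= (k * d - eC) * (k * d - eA)) by (apply Rmult_le_pos; lra).
    unfold S. nra. }
  assert (Hpsd : 0 <= (k * X11 - d) * a ^ 2 + 2 * (k * X12) * a * b + (k * X22 - d) * b ^ 2).
  { apply quad_form_nonneg.
    - replace (k * X11 - d + (k * X22 - d)) with (k * (X11 + X22) - 2 * d) by ring.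
      rewrite Htrace. lra.
    - replace ((k * X11 - d) * (k * X22 - d))
        with (k ^ 2 * (X11 * X22 - X12 ^ 2) - d * k * (X11 + X22) + d ^ 2 + (k * X12) ^ 2)
        by ring.
      rewrite Hdet, Htrace. lra. }
  enough (k * ((a * u1 + b * u2) ^ 2 + (a * v1 + b * v2) ^ 2 + (a * (v1 - u1) + b * (v2 - u2)) ^ 2)
          - d * (a ^ 2 + b ^ 2)
          = (k * X11 - d) * a ^ 2 + 2 * (k * X12) * a * b + (k * X22 - d) * b ^ 2) by lra.
  unfold X11, X12, X22. ring.
Qed.

Definition sqdist (x y : pt) : R := dot (vsub x y) (vsub x y).

Lemma sqdist_sym (x y : pt) : sqdist x y = sqdist y x.
Proof. unfold sqdist, dot, vsub. cbn [fst snd]. ring. Qed.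

Lemma sqdist_convex_comb_le (l1 l2 l3 : R) (P Q S y : pt) (M : R) :
  0 <= l1 -> 0 <= l2 -> 0 <= l3 -> l1 + l2 + l3 = 1 ->
  sqdist P y <= M -> sqdist Q y <= M -> sqdist S y <= M ->
  sqdist (l1 * fst P + l2 * fst Q + l3 * fst S, l1 * snd P + l2 * snd Q + l3 * snd S) y <= M.
Proof.
  intros H1 H2 H3 Hsum HP HQ HS.
  assert (Hdefect : l1 * sqdist P y + l2 * sqdist Q y + l3 * sqdist S y
    - sqdist (l1 * fst P + l2 * fst Q + l3 * fst S, l1 * snd P + l2 * snd Q + l3 * snd S) y
    = l1 * l2 * sqdist P Q + l1 * l3 * sqdist P S + l2 * l3 * sqdist Q S).
  { unfold sqdist, dot, vsub. cbn [fst snd]. replace l3 with (1 - l1 - l2) by lra. ring. }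
  assert (Hnn : forall x z, 0 <= sqdist x z) by (intros; unfold sqdist, dot; nra).
  pose proof (Hnn P Q). pose proof (Hnn P S). pose proof (Hnn Q S).
  assert (0 <= l1 * l2 * sqdist P Q) by (apply Rmult_le_pos; nra).
  assert (0 <= l1 * l3 * sqdist P S) by (apply Rmult_le_pos; nra).
  assert (0 <= l2 * l3 * sqdist Q S) by (apply Rmult_le_pos; nra).
  nra.
Qed.

Lemma in_tri_sqdist_le (A B C y x : pt) (M : R) :
  sqdist A y <= M -> sqdist B y <= M -> sqdist C y <= M ->
  in_tri A B C x -> sqdist x y <= M.
Proof.
  intros HA HB HC [l1 [l2 [l3 [H1 [H2 [H3 [Hsum [Hx Hy]]]]]]]].
  destruct x as [x1 x2]. cbn [fst snd] in Hx, Hy. subst x1 x2.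
  now apply sqdist_convex_comb_le.
Qed.

Lemma in_tri_pair_sqdist_le (A B C x y : pt) (M : R) :
  sqdist B A <= M -> sqdist C A <= M -> sqdist C B <= M ->
  in_tri A B C x -> in_tri A B C y -> sqdist x y <= M.
Proof.
  intros HBA HCA HCB Hx Hy.
  assert (HM : 0 <= M) by (eapply Rle_trans; [|exact HBA]; unfold sqdist, dot; nra).
  assert (Hself : forall P, sqdist P P <= M) by (intros; unfold sqdist, dot, vsub; cbn [fst snd]; nra).
  apply (in_tri_sqdist_le A B C); auto; rewrite sqdist_sym;
    apply (in_tri_sqdist_le A B C); auto; rewrite sqdist_sym; auto.
Qed.

Lemma in_tri_A (A B C : pt) : in_tri A B C A.
Proof. exists 1, 0, 0. repeat split; try lra; cbn [fst snd]; ring. Qed.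

Lemma in_tri_B (A B C : pt) : in_tri A B C B.
Proof. exists 0, 1, 0. repeat split; try lra; cbn [fst snd]; ring. Qed.

Lemma diam_sq_le (A B C : pt) (h M : R) :
  sqdist B A <= M -> sqdist C A <= M -> sqdist C B <= M ->
  is_diam A B C h -> h ^ 2 <= M.
Proof.
  intros HBA HCA HCB [Hub Hlub].
  assert (HM : 0 <= M) by (eapply Rle_trans; [|exact HBA]; unfold sqdist, dot; nra).
  assert (Hh0 : 0 <= h).
  { apply Hub. exists A, A. repeat split; try apply in_tri_A.
    unfold dist2, dot, vsub. cbn [fst snd]. rewrite <- sqrt_0. f_equal. ring. }
  assert (HhM : h <= sqrt M).
  { apply Hlub. intros r [x [y [Hx [Hy ->]]]].
    apply sqrt_le_1_alt. now apply (in_tri_pair_sqdist_le A B C). }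
  rewrite <- (Rsqr_sqrt M), <- Rsqr_pow2 by exact HM.
  apply Rsqr_incr_1; auto using sqrt_pos.
Qed.

Lemma diam_sq_le_vertex_dots (A B C : pt) (h m : R) :
  dot (vsub B A) (vsub C A) <= m -> dot (vsub C B) (vsub A B) <= m ->
  dot (vsub A C) (vsub B C) <= m ->
  is_diam A B C h -> h ^ 2 <= 2 * m.
Proof.
  intros HA HB HC. apply diam_sq_le;
    unfold sqdist, dot, vsub in *; cbn [fst snd] in *; lra.
Qed.

Lemma nondegenerate_sqdist_pos (A B C : pt) : nondegenerate A B C -> 0 < sqdist B A.
Proof.
  unfold nondegenerate, sqdist, det2, dot, vsub. cbn [fst snd].
  set (x := fst B - fst A). set (y := snd B - snd A).
  intros Hnd. apply Rnot_le_lt. intros Hle. apply Hnd.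
  assert (Hx : x = 0) by nra. assert (Hy : y = 0) by nra.
  rewrite Hx, Hy. ring.
Qed.

Lemma diam_pos (A B C : pt) (h : R) :
  nondegenerate A B C -> is_diam A B C h -> 0 < h.
Proof.
  intros Hnd [Hub _].
  apply Rlt_le_trans with (dist2 B A).
  - apply sqrt_lt_R0, (nondegenerate_sqdist_pos A B C Hnd).
  - apply Hub. exists B, A. repeat split; auto using in_tri_A, in_tri_B.
Qed.

(* The free right-hand side [v : R] lets this apply to equations stated in
   Coquelicot's module carrier, on which [field] would fail. *)
Lemma RInt_by_antiderivative (F f : R -> R) (a b v : R) :
  (forall x, is_derive F x (f x)) -> (forall x, continuous f x) ->
  F b - F a = v -> RInt f a b = v.
Proof.
  intros HF Hf <-. apply is_RInt_unique. apply (is_RInt_derive F f a b); auto.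
Qed.

Lemma tri_integral_iterated (A B C : pt) (g : pt -> R) (v : R) :
  tri_integral_is A B C g v ->
  v = twice_area A B C * RInt (fun s => RInt (fun t => g (Fref A B C s t)) 0 (1 - s)) 0 1.
Proof.
  intros [h [Hh [pr Hv]]]. rewrite Hv, <- (RInt_Reals _ _ _ pr). f_equal.
  apply RInt_ext. intros s Hs.
  rewrite Rmin_left, Rmax_right in Hs by lra.
  destruct (Hh s ltac:(lra)) as [prs <-]. now rewrite (RInt_Reals _ _ _ prs).
Qed.

Lemma tri_integral_const (A B C : pt) (K v : R) :
  tri_integral_is A B C (fun _ => K) v -> v = twice_area A B C * (K / 2).
Proof.
  intros Hv. rewrite (tri_integral_iterated _ _ _ _ _ Hv). f_equal.
  rewrite (RInt_ext _ (fun s => (1 - s) * K)).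
  2:{ intros s _. rewrite RInt_const. unfold scal; simpl; unfold mult; simpl. ring. }
  apply (RInt_by_antiderivative (fun s => (s - s ^ 2 / 2) * K)).
  - intros s. auto_derive; auto. field.
  - intros s. apply (@ex_derive_continuous R_AbsRing R_NormedModule). auto_derive. auto.
  - field.
Qed.

Lemma RInt_ref_triangle_sq (al be ga : R) :
  RInt (fun s => RInt (fun t => (al + be * s + ga * t) ^ 2) 0 (1 - s)) 0 1 =
  al ^ 2 / 2 + al * be / 3 + al * ga / 3 + be ^ 2 / 12 + ga ^ 2 / 12 + be * ga / 12.
Proof.
  set (H := fun s => (al + be * s) ^ 2 * (1 - s) + (al + be * s) * ga * (1 - s) ^ 2
                     + ga ^ 2 * (1 - s) ^ 3 / 3).
  rewrite (RInt_ext _ H).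
  2:{ intros s _.
      apply (RInt_by_antiderivative
               (fun t => (al + be * s) ^ 2 * t + (al + be * s) * ga * t ^ 2 + ga ^ 2 * t ^ 3 / 3)).
      - intros t. auto_derive; auto. field.
      - intros t. apply (@ex_derive_continuous R_AbsRing R_NormedModule). auto_derive. auto.
      - unfold H. field. }
  (* c0 + c1 s + c2 s^2 + c3 s^3 is H s expanded in powers of s *)
  set (c0 := al ^ 2 + al * ga + ga ^ 2 / 3).
  set (c1 := 2 * al * be - al ^ 2 + ga * be - 2 * al * ga - ga ^ 2).
  set (c2 := be ^ 2 - 2 * al * be + al * ga - 2 * be * ga + ga ^ 2).
  set (c3 := - be ^ 2 + be * ga - ga ^ 2 / 3).
  apply (RInt_by_antiderivative (fun s => c0 * s + c1 * s ^ 2 / 2 + c2 * s ^ 3 / 3 + c3 * s ^ 4 / 4)).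
  - intros s. auto_derive; auto. unfold H, c0, c1, c2, c3. field.
  - intros s. unfold H. apply (@ex_derive_continuous R_AbsRing R_NormedModule). auto_derive. auto.
  - unfold c0, c1, c2, c3. field.
Qed.

Lemma affine_Fref (a b c : R) (A B C : pt) (s t : R) :
  let p := affine a b c in
  p (Fref A B C s t) = p A + (p B - p A) * s + (p C - p A) * t.
Proof. unfold affine, Fref. simpl. ring. Qed.

Lemma tri_integral_affine_sq_ge (A B C : pt) (a b c v : R) :
  let p := affine a b c in
  tri_integral_is A B C (fun x => p x ^ 2) v ->
  twice_area A B C * ((p B - p A) ^ 2 + (p C - p A) ^ 2 + (p C - p B) ^ 2) / 72 <= v.
Proof.
  intros p Hv. rewrite (tri_integral_iterated _ _ _ _ _ Hv).
  rewrite (RInt_ext _ (fun s => RInt (fun t => (p A + (p B - p A) * s + (p C - p A) * t) ^ 2) 0 (1 - s))).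
  2:{ intros s _. apply RInt_ext. intros t _. unfold p. now rewrite affine_Fref. }
  rewrite RInt_ref_triangle_sq.
  assert (Hd : 0 <= twice_area A B C) by apply Rabs_pos.
  (* the integral exceeds the bound by d/2 times the square of p at the centroid *)
  pose proof (pow2_ge_0 (p A + (p B - p A + (p C - p A)) / 3)).
  nra.
Qed.

Lemma sqrt_le_inv_mul_sqrt (h c x y : R) :
  0 < h -> 0 <= c -> h ^ 2 * x <= c * y -> sqrt x <= sqrt c * / h * sqrt y.
Proof.
  intros Hh Hc Hxy.
  apply (Rmult_le_reg_r h); [exact Hh|].
  replace (sqrt c * / h * sqrt y * h) with (sqrt (c * y)) by (rewrite sqrt_mult_alt by lra; field; lra).
  replace (sqrt x * h) with (sqrt (h ^ 2 * x))
    by (rewrite sqrt_mult_alt, sqrt_pow2 by (lra || apply pow2_ge_0); ring).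
  now apply sqrt_le_1_alt.
Qed.

Theorem lemma4p4 (w0 : R) (A B C : pt) (hT : R) (a b c : R) (I0 I1 : R) :
  0 < w0 -> w0 <= PI / 3 ->
  nondegenerate A B C ->
  w0 <= angle_at A B C -> w0 <= angle_at B C A -> w0 <= angle_at C A B ->
  is_diam A B C hT ->
  tri_integral_is A B C (fun x => (affine a b c x) ^ 2) I0 ->
  tri_integral_is A B C (fun _ => a ^ 2 + b ^ 2) I1 ->
  sqrt I1 <= sqrt (c_inv_sq w0) * / hT * sqrt I0.
Proof.
  intros Hw0 Hw1 Hnd HA HB HC Hdiam HI0 HI1.
  set (k := cot w0). set (d := twice_area A B C). set (p := affine a b c).
  set (Q := (p B - p A) ^ 2 + (p C - p A) ^ 2 + (p C - p B) ^ 2).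
  assert (Hk : 0 < k) by (apply cot_pos; lra).
  assert (Hd : 0 < d) by (apply Rabs_pos_lt, Hnd).
  destruct (vertex_dots_le w0 A B C ltac:(lra) Hnd HA HB HC) as [eA [eB eC]].
  pose proof (diam_sq_le_vertex_dots A B C hT _ eA eB eC Hdiam) as HhT.
  pose proof (tri_integral_affine_sq_ge A B C a b c I0 HI0) as HQ.
  pose proof (tri_integral_const A B C _ I1 HI1) as HI1eq.
  pose proof (twice_area_grad_sq_le A B C k a b c Hd eA eB eC) as Hgrad.
  fold k d in HhT. fold d p Q in HQ, HI1eq, Hgrad.
  rewrite c_inv_sq_eq by lra.
  apply sqrt_le_inv_mul_sqrt; [eapply diam_pos; eauto | nra |].
  rewrite HI1eq.
  apply Rle_trans with (2 * (k * d) * (d * ((a ^ 2 + b ^ 2) / 2))).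
  { apply Rmult_le_compat_r; [nra | exact HhT]. }
  apply Rle_trans with (k * d * (k * Q)).
  { replace (2 * (k * d) * (d * ((a ^ 2 + b ^ 2) / 2))) with (k * d * (d * (a ^ 2 + b ^ 2))) by field.
    apply Rmult_le_compat_l; nra. }
  replace (k * d * (k * Q)) with (72 * k ^ 2 * (d * Q / 72)) by field.
  apply Rmult_le_compat_l; nra.
Qed.
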